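(* Let $\mathcal{V}$ be a non-trivial quantale, let $\mathsf{F}\colon\mathbf{Set}\to\mathbf{Set}$ be a functor, and let $\overline{\mathsf{F}}\colon\mathbf{Cat}(\mathcal{V})\to\mathbf{Cat}(\mathcal{V})$ be any lifting of $\mathsf{F}$. Then $\overline{\mathsf{F}}$ is topological with respect to some class $\Lambda$ of natural transformations of the form $\lambda\colon \mathbf{Cat}(\mathcal{V})(-,A_\lambda)\to \mathbf{Set}(\mathsf{F}|-|,|\mathcal{V}|)$, where each $A_\lambda$ is a $\mathcal{V}$-category. That is, for every $\mathcal{V}$-category $X$, the structure of $\overline{\mathsf{F}}X$ is the initial structure on $\mathsf{F}|X|$ with respect to the structured cone of all maps $\lambda_X(f)\colon \mathsf{F}|X|\to|\mathcal{V}|$, where $\lambda$ ranges over $\Lambda$ and $f$ over all $\mathcal{V}$-functors $X\to A_\lambda$.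
   Context: A (commutative unital) quantale $(\mathcal{V},\otimes,k)$ is a complete lattice with a commutative monoid structure $(\otimes,k)$ such that each $u\otimes-$ preserves all joins; $\hom(u,-)$ denotes the right adjoint of $u\otimes-$. It is non-trivial if $\bot\neq\top$. A $\mathcal{V}$-category is a set $X$ with $a\colon X\times X\to\mathcal{V}$ such that $k\le a(x,x)$ and $a(x,y)\otimes a(y,z)\le a(x,z)$; a $\mathcal{V}$-functor $f\colon(X,a)\to(Y,b)$ is a map with $a(x,y)\le b(f(x),f(y))$; these form the category $\mathbf{Cat}(\mathcal{V})$ with forgetful functor $|-|$ to $\mathbf{Set}$. $\mathcal{V}$ is regarded as the $\mathcal{V}$-category $(\mathcal{V},\hom)$. Given a set $Z$ and maps $f_i\colon Z\to|(X_i,a_i)|$, the initial structure on $Z$ is $a(x,y)=\bigwedge_i a_i(f_i(x),f_i(y))$. A lifting of $\mathsf{F}$ to $\mathbf{Cat}(\mathcal{V})$ is a functor $\overline{\mathsf{F}}$ with $|-|\cdot\overline{\mathsf{F}}=\mathsf{F}\cdot|-|$. *)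

Set Implicit Arguments.
Unset Strict Implicit.

Record Quantale := {
  qV :> Type;
  qle : qV -> qV -> Prop;
  qle_refl : forall x, qle x x;
  qle_trans : forall x y z, qle x y -> qle y z -> qle x z;
  qle_antisym : forall x y, qle x y -> qle y x -> x = y;
  qsup : (qV -> Prop) -> qV;
  qsup_ub : forall (S : qV -> Prop) x, S x -> qle x (qsup S);
  qsup_least : forall (S : qV -> Prop) y, (forall x, S x -> qle x y) -> qle (qsup S) y;
  qtensor : qV -> qV -> qV;
  qk : qV;
  qtensor_assoc : forall x y z, qtensor x (qtensor y z) = qtensor (qtensor x y) z;
  qtensor_comm : forall x y, qtensor x y = qtensor y x;
  qtensor_unit : forall x, qtensor qk x = x;
  qtensor_sup : forall u (S : qV -> Prop),
    qtensor u (qsup S) = qsup (fun w => exists s, S s /\ w = qtensor u s)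
}.

Section QDefs.
Variable Q : Quantale.
Definition qinf (S : Q -> Prop) : Q := qsup (fun x => forall s, S s -> qle x s).
Definition qbot : Q := qsup (fun _ => False).
Definition qtop : Q := qsup (fun _ => True).
Definition qhom (u v : Q) : Q := qsup (fun w => qle (qtensor u w) v).
Definition nontrivial : Prop := qbot <> qtop.

Record VCat := {
  vcarrier :> Type;
  vhom : vcarrier -> vcarrier -> Q;
  vrefl : forall x, qle (qk Q) (vhom x x);
  vtrans : forall x y z, qle (qtensor (vhom x y) (vhom y z)) (vhom x z)
}.

Record VFun (X Y : VCat) := {
  vmap :> X -> Y;
  vmono : forall x y, qle (vhom x y) (vhom (vmap x) (vmap y))
}.

Definition vcomp (X Y Z : VCat) (g : VFun Y Z) (f : VFun X Y) : VFun X Z.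
Proof.
  refine {| vmap := fun x => g (f x) |}.
  intros x y. eapply qle_trans; [apply (vmono f) | apply (vmono g)].
Defined.
End QDefs.

Record SetFunctor := {
  fobj :> Type -> Type;
  fmap : forall A B : Type, (A -> B) -> fobj A -> fobj B;
  fmap_id : forall (A : Type) (x : fobj A), fmap (fun a : A => a) x = x;
  fmap_comp : forall (A B C : Type) (f : A -> B) (g : B -> C) (x : fobj A),
    fmap (fun a => g (f a)) x = fmap g (fmap f x)
}.

(** A lifting of F to Cat(V): a functor Fbar with |-| . Fbar = F . |-|.
    Such a functor sends X to (F|X|, lstr X) and a V-functor f to F f;
    functoriality is then inherited from F. *)
Arguments fmap s [A B] _ _.
Unset Implicit Arguments.
Record Lifting (Q : Quantale) (F : SetFunctor) := {
  lstr : forall X : VCat Q, F X -> F X -> Q;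
  lrefl : forall (X : VCat Q) (u : F X), qle (qk Q) (lstr X u u);
  ltrans : forall (X : VCat Q) (u v w : F X),
    qle (qtensor (lstr X u v) (lstr X v w)) (lstr X u w);
  lfun : forall (X Y : VCat Q) (f : VFun X Y) (u v : F X),
    qle (lstr X u v) (lstr Y (fmap F (vmap f) u) (fmap F (vmap f) v))
}.


(* Take for Lambda all pairs (Z, z) with z in F|Z|, and let lambda_(Z,z) send a
   V-functor f : X -> Z to u |-> (Fbar Z)(z, F f u).  Naturality is functoriality
   of F.  Since F f is a V-functor Fbar X -> Fbar Z, transitivity in Fbar Z gives
   (Fbar X)(u, v) <= hom(lambda f u, lambda f v) for every cone member, and the
   member (X, u) with f = 1_X attains the bound: as k <= (Fbar X)(u, u), one has
   hom((Fbar X)(u, u), (Fbar X)(u, v)) <= (Fbar X)(u, v).  This is the Yoneda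
   lemma for the V-category Fbar X. *)

Section QuantaleFacts.
Variable Q : Quantale.
Implicit Types a b c : Q.

Lemma qtensor_monor a b c : qle a b -> qle (qtensor c a) (qtensor c b).
Proof.
  intro Hab.
  assert (Hb : qsup (fun w => w = a \/ w = b) = b).
  { apply qle_antisym.
    - apply qsup_least. intros x [-> | ->]; [exact Hab | apply qle_refl].
    - apply qsup_ub. now right. }
  rewrite <- Hb, qtensor_sup. apply qsup_ub. exists a. split; [now left | reflexivity].
Qed.

Lemma qhom_adj a b c : qle c (qhom a b) <-> qle (qtensor a c) b.
Proof.
  split; intro H.
  - eapply qle_trans; [apply qtensor_monor, H |].
    unfold qhom. rewrite qtensor_sup. apply qsup_least.
    now intros x [s [Hs ->]].
  - now apply qsup_ub.
Qed.

Lemma qhom_le a b : qle (qk Q) a -> qle (qhom a b) b.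
Proof.
  intro Hka.
  eapply qle_trans with (qtensor (qk Q) (qhom a b)).
  { rewrite qtensor_unit. apply qle_refl. }
  eapply qle_trans; [| apply (proj1 (qhom_adj a b _) (qle_refl _))].
  rewrite (qtensor_comm (qk Q)), (qtensor_comm a).
  now apply qtensor_monor.
Qed.

Lemma qinf_lb (S : Q -> Prop) s : S s -> qle (qinf S) s.
Proof. intro Hs. apply qsup_least. intros x Hx. now apply Hx. Qed.

Lemma qinf_glb (S : Q -> Prop) a : (forall s, S s -> qle a s) -> qle a (qinf S).
Proof. intro H. now apply qsup_ub. Qed.

Lemma qinf_eq (S : Q -> Prop) a :
  (forall s, S s -> qle a s) -> (exists s, S s /\ qle s a) -> qinf S = a.
Proof.
  intros Hlb [s [Hs Hsa]]. apply qle_antisym.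
  - eapply qle_trans; [apply qinf_lb, Hs | exact Hsa].
  - now apply qinf_glb.
Qed.

End QuantaleFacts.

Definition vid {Q : Quantale} (X : VCat Q) : VFun X X :=
  {| vmap := fun x => x; vmono := fun x y => qle_refl _ |}.

Section LiftingCone.
Variables (Q : Quantale) (F : SetFunctor) (L : Lifting Q F).

Definition lstr_from (l : {Z : VCat Q & F Z}) (X : VCat Q) (f : VFun X (projT1 l))
  (u : F X) : Q :=
  lstr Q F L (projT1 l) (projT2 l) (fmap F (vmap f) u).

Lemma lstr_from_natural (l : {Z : VCat Q & F Z}) (X Y : VCat Q) (g : VFun Y X)
  (f : VFun X (projT1 l)) (u : F Y) :
  lstr_from l Y (vcomp f g) u = lstr_from l X f (fmap F (vmap g) u).
Proof. unfold lstr_from. f_equal. exact (fmap_comp (vmap g) (vmap f) u). Qed.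

Lemma lstr_le_qhom_lstr_from (l : {Z : VCat Q & F Z}) (X : VCat Q)
  (f : VFun X (projT1 l)) (u v : F X) :
  qle (lstr Q F L X u v) (qhom (lstr_from l X f u) (lstr_from l X f v)).
Proof.
  destruct l as [Z z]. apply qhom_adj.
  eapply qle_trans; [| apply (ltrans Q F L Z z (fmap F (vmap f) u))].
  apply qtensor_monor, lfun.
Qed.

Lemma lstr_from_vid (X : VCat Q) (u v : F X) :
  lstr_from (existT _ X u) X (vid X) v = lstr Q F L X u v.
Proof. unfold lstr_from. simpl. now rewrite fmap_id. Qed.

Lemma lstr_initial (X : VCat Q) (u v : F X) :
  lstr Q F L X u v =
  qinf (fun w => exists (l : {Z : VCat Q & F Z}) (f : VFun X (projT1 l)),
           w = qhom (lstr_from l X f u) (lstr_from l X f v)).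
Proof.
  symmetry. apply qinf_eq.
  - intros w [l [f ->]]. apply lstr_le_qhom_lstr_from.
  - exists (qhom (lstr Q F L X u u) (lstr Q F L X u v)). split.
    + exists (existT _ X u), (vid X). now rewrite !lstr_from_vid.
    + apply qhom_le, lrefl.
Qed.

End LiftingCone.

Theorem theorem2 (Q : Quantale) (HQ : nontrivial Q) (F : SetFunctor)
  (L : Lifting Q F) :
  exists (Lam : Type) (A : Lam -> VCat Q)
    (lam : forall (l : Lam) (X : VCat Q), VFun X (A l) -> F X -> Q),
    (* each lam l is a natural transformation Cat(V)(-,A l) -> Set(F|-|,|V|) *)
    (forall (l : Lam) (X Y : VCat Q) (g : VFun Y X) (f : VFun X (A l)) (u : F Y),
        lam l Y (vcomp f g) u = lam l X f (fmap F (vmap g) u)) /\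
    (* the structure of Fbar X is initial w.r.t. all lam_X(f) : F|X| -> |V| *)
    (forall (X : VCat Q) (u v : F X),
        lstr Q F L X u v =
        qinf (fun w => exists (l : Lam) (f : VFun X (A l)),
                 w = qhom (lam l X f u) (lam l X f v))).
Proof.
  exists {Z : VCat Q & F Z}, (fun l => projT1 l), (lstr_from Q F L).
  split.
  - exact (lstr_from_natural Q F L).
  - exact (lstr_initial Q F L).
Qed.
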